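(* Let $G=(V,E,A)$ be an undirected, unweighted attributed graph with attribute set $A=\{a,b\}$ (each vertex $v$ has one attribute $A(v)\in\{a,b\}$), let $color:V\to\mathbb{N}$ be a fixed proper vertex coloring of $G$ (adjacent vertices receive distinct colors), and let $k,\delta$ be integers. For a subgraph $H$ of $G$, an edge $(u,v)$ of $H$ and an attribute $x\in\{a,b\}$, let $$\overline{sup}^{H}_{x}(u,v)=\bigl|\{color(w)\;:\; w\in N_H(u)\cap N_H(v),\ A(w)=x\}\bigr|.$$ Let $G'$ be the maximal subgraph of $G$ such that for every edge $(u,v)$ of $G'$: (i) if $A(u)=A(v)=a$, then $\overline{sup}^{G'}_{a}(u,v)\ge k-2$ and $\overline{sup}^{G'}_{b}(u,v)\ge k$; (ii) if $A(u)=A(v)=b$, then $\overline{sup}^{G'}_{a}(u,v)\ge k$ and $\overline{sup}^{G'}_{b}(u,v)\ge k-2$; (iii) if $\{A(u),A(v)\}=\{a,b\}$, then $\overline{sup}^{G'}_{a}(u,v)\ge k-1$ and $\overline{sup}^{G'}_{b}(u,v)\ge k-1$. Then every $(k,\delta)$-relative fair clique of $G$ is contained in $G'$ (i.e., all its vertices and all edges among them belong to $G'$).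
   Context: For a vertex set $S$, $cnt_S(a)=|\{v\in S: A(v)=a\}|$ and $cnt_S(b)=|\{v\in S: A(v)=b\}|$. $N_H(u)$ denotes the set of neighbors of $u$ in $H$. A $(k,\delta)$-relative fair clique of $G$ is a clique $C$ of $G$ such that (1) $cnt_C(a)\ge k$, $cnt_C(b)\ge k$ and $|cnt_C(a)-cnt_C(b)|\le\delta$, and (2) there is no clique $C'\supsetneq C$ of $G$ satisfying (1). The quantity $\overline{sup}_x(u,v)$ is called the colorful support of edge $(u,v)$ with respect to attribute $x$. *)

From HB Require Import structures.
From mathcomp Require Import all_boot all_order all_algebra.
Set Implicit Arguments. Unset Strict Implicit. Unset Printing Implicit Defensive.
Import Order.TTheory GRing.Theory Num.Theory.

Inductive attr := attr_a | attr_b.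
Definition attr_eqb (x y : attr) : bool :=
  match x, y with attr_a, attr_a | attr_b, attr_b => true | _, _ => false end.
Lemma attr_eqP : Equality.axiom attr_eqb.
Proof. by case; case; constructor. Qed.
HB.instance Definition _ := hasDecEq.Build attr attr_eqP.

Section Defs.
Variable T : finType.

Definition cnt (A : T -> attr) (S : {set T}) (x : attr) : nat :=
  #|[set v in S | A v == x]|.

Definition is_clique (e : rel T) (C : {set T}) : Prop :=
  forall u v, u \in C -> v \in C -> u != v -> e u v.

Definition fair_cond (A : T -> attr) (k delta : int) (C : {set T}) : Prop :=
  (k <= (cnt A C attr_a)%:Z)%R /\ (k <= (cnt A C attr_b)%:Z)%R /\
  (`|(cnt A C attr_a)%:Z - (cnt A C attr_b)%:Z| <= delta)%R.

Definition relative_fair_clique (e : rel T) (A : T -> attr) (k delta : int)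
    (C : {set T}) : Prop :=
  is_clique e C /\ fair_cond A k delta C /\
  ~ (exists C' : {set T}, C \proper C' /\ is_clique e C' /\ fair_cond A k delta C').

(* A subgraph H = (VH, EH) of G = (T, e): undirected edges are stored as
   symmetric sets of ordered pairs. *)
Definition is_subgraph (e : rel T) (VH : {set T}) (EH : {set (T * T)}) : Prop :=
  (forall u v, (u, v) \in EH -> [/\ e u v, u \in VH, v \in VH & (v, u) \in EH]).

Definition nbr (EH : {set (T * T)}) (u : T) : {set T} := [set w | (u, w) \in EH].

Definition csup (A : T -> attr) (color : T -> nat) (EH : {set (T * T)})
    (x : attr) (u v : T) : nat :=
  size (undup [seq color w | w <- enum (nbr EH u :&: nbr EH v) & A w == x]).

Definition edge_cond (A : T -> attr) (color : T -> nat) (k : int)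
    (EH : {set (T * T)}) : Prop :=
  forall u v, (u, v) \in EH ->
    [/\ (A u = attr_a -> A v = attr_a ->
           (k - 2 <= (csup A color EH attr_a u v)%:Z)%R /\
           (k <= (csup A color EH attr_b u v)%:Z)%R),
        (A u = attr_b -> A v = attr_b ->
           (k <= (csup A color EH attr_a u v)%:Z)%R /\
           (k - 2 <= (csup A color EH attr_b u v)%:Z)%R)
      & (A u <> A v ->
           (k - 1 <= (csup A color EH attr_a u v)%:Z)%R /\
           (k - 1 <= (csup A color EH attr_b u v)%:Z)%R)].

Definition maximal_reduced (e : rel T) (A : T -> attr) (color : T -> nat) (k : int)
    (V' : {set T}) (E' : {set (T * T)}) : Prop :=
  [/\ is_subgraph e V' E', edge_cond A color k E' &
      forall (VH : {set T}) (EH : {set (T * T)}),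
        is_subgraph e VH EH -> edge_cond A color k EH ->
        V' \subset VH -> E' \subset EH -> VH = V' /\ EH = E'].

End Defs.

(** The graph obtained from G' by adding a fair clique C and all its edges
    still satisfies the edge conditions: supports of old edges can only grow,
    and for an edge (u, v) of C the other vertices of C with attribute x are
    common neighbours of u and v with pairwise distinct colors, so the
    x-support of (u, v) is at least cnt_C(x) - [A u = x] - [A v = x], which is
    at least the demand k - [A u = x] - [A v = x] encoded by (i)-(iii).
    Maximality of G' then forces C into G'. *)

From mathcomp Require Import all_boot all_order all_algebra.
From mathcomp Require Import zify.

Set Implicit Arguments.
Unset Strict Implicit.
Unset Printing Implicit Defensive.
Import Order.TTheory GRing.Theory Num.Theory.

Local Open Scope ring_scope.

Section ColorfulSupport.
Variables (T : finType) (A : T -> attr) (color : T -> nat).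

Lemma edge_condE (k : int) (EH : {set T * T}) :
  edge_cond A color k EH <->
  (forall u v, (u, v) \in EH -> forall x,
     k - (A u == x)%:Z - (A v == x)%:Z <= (csup A color EH x u v)%:Z).
Proof.
split=> H u v /H.
  case: (A u); case: (A v) => -[/= Haa Hbb Hab] x.
  - by have [? ?] := Haa erefl erefl; case: x => /=; lia.
  - by have [? ?] := Hab ltac:(discriminate); case: x => /=; lia.
  - by have [? ?] := Hab ltac:(discriminate); case: x => /=; lia.
  - by have [? ?] := Hbb erefl erefl; case: x => /=; lia.
move=> Hx; have := Hx attr_a; have := Hx attr_b.
by case: (A u); case: (A v) => /= Hb Ha;
  split=> [_ _ | _ _ | Hne] //; split; lia.
Qed.

Lemma csup_subset (E1 E2 : {set T * T}) x u v :
  E1 \subset E2 -> (csup A color E1 x u v <= csup A color E2 x u v)%N.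
Proof.
move=> sE12; apply: uniq_leq_size; first exact: undup_uniq.
move=> c; rewrite !mem_undup => /mapP [w]; rewrite mem_filter mem_enum !inE.
move=> /and3P [Hx Hu Hv] ->; apply: map_f.
by rewrite mem_filter Hx mem_enum !inE (subsetP sE12 _ Hu) (subsetP sE12 _ Hv).
Qed.

Lemma card_le_csup (EH : {set T * T}) x u v (S : {set T}) :
  {in S &, injective color} ->
  (forall w, w \in S -> [/\ A w = x, (u, w) \in EH & (v, w) \in EH]) ->
  (#|S| <= csup A color EH x u v)%N.
Proof.
move=> color_inj HS; rewrite cardE -(size_map color).
apply: uniq_leq_size; first by rewrite map_inj_in_uniq ?enum_uniq // => ? ?;
  rewrite !mem_enum; apply: color_inj.
move=> c /mapP [w]; rewrite mem_enum => /HS [Hx Hu Hv] ->.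
by rewrite mem_undup; apply: map_f; rewrite mem_filter Hx eqxx mem_enum !inE Hu Hv.
Qed.

End ColorfulSupport.

Lemma card_le_setD2 (T : finType) (S : {set T}) u v :
  (#|S| <= #|S :\ u :\ v| + (u \in S) + (v \in S))%N.
Proof.
rewrite (cardsD1 u S) (cardsD1 v (S :\ u)) !inE.
by case: (v == u); case: (u \in S); case: (v \in S) => /=; lia.
Qed.

Section FairClique.
Variables (T : finType) (e : rel T) (A : T -> attr) (color : T -> nat).
Hypothesis color_proper : forall u v, e u v -> color u != color v.

Definition clique_edges (C : {set T}) : {set T * T} :=
  [set p | [&& p.1 \in C, p.2 \in C & p.1 != p.2]].

Lemma clique_color_inj (C : {set T}) :
  is_clique e C -> {in C &, injective color}.
Proof.
move=> cl w w' wC w'C; apply: contra_eq => ww'.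
exact: color_proper (cl _ _ wC w'C ww').
Qed.

Lemma is_subgraph_clique (C : {set T}) :
  is_clique e C -> is_subgraph e C (clique_edges C).
Proof.
by move=> cl u v; rewrite !inE /= => /and3P [uC vC uv]; rewrite cl // uC vC eq_sym.
Qed.

Lemma is_subgraph_setU (V1 V2 : {set T}) (E1 E2 : {set T * T}) :
  is_subgraph e V1 E1 -> is_subgraph e V2 E2 ->
  is_subgraph e (V1 :|: V2) (E1 :|: E2).
Proof.
move=> H1 H2 u v; rewrite !inE => /orP [/H1 | /H2] [-> uV vV vuE];
  by rewrite uV vV vuE ?orbT.
Qed.

Lemma cnt_le_csup_clique (C : {set T}) (EH : {set T * T}) x u v :
  is_clique e C -> clique_edges C \subset EH ->
  u \in C -> v \in C -> u != v ->
  (cnt A C x <= csup A color EH x u v + (A u == x) + (A v == x))%N.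
Proof.
move=> cl sCE uC vC uv; set S := [set w in C | A w == x].
have edgeC w w' : w \in C -> w' \in C -> w != w' -> (w, w') \in EH.
  by move=> wC w'C ww'; apply: (subsetP sCE); rewrite inE /= wC w'C ww'.
have HS : (#|S :\ u :\ v| <= csup A color EH x u v)%N.
  apply: card_le_csup.
    have sSC : {subset S :\ u :\ v <= C} by move=> w; rewrite !inE => /and4P [].
    by move=> w w' /sSC wC /sSC w'C; apply: (clique_color_inj cl).
  move=> w; rewrite !inE => /and4P [wv wu wC /eqP Ax].
  by split; rewrite // edgeC // eq_sym.
have := card_le_setD2 S u v; rewrite /cnt -/S !inE uC vC /=; lia.
Qed.

End FairClique.

Theorem lemma3 (T : finType) (e : rel T) (A : T -> attr) (color : T -> nat)
    (k delta : int)
    (e_sym : symmetric e) (e_irr : irreflexive e)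
    (color_proper : forall u v, e u v -> color u != color v)
    (V' : {set T}) (E' : {set (T * T)})
    (HG' : maximal_reduced e A color k V' E')
    (C : {set T}) (HC : relative_fair_clique e A k delta C) :
  C \subset V' /\ (forall u v, u \in C -> v \in C -> u != v -> (u, v) \in E').
Proof.
case: HG' => subG' /edge_condE condG' maxG'.
case: HC => cl [[ka [kb _]] _].
set EH := E' :|: clique_edges C.
have sE'EH : E' \subset EH by exact: subsetUl.
have sCEH : clique_edges C \subset EH by exact: subsetUr.
have condEH : edge_cond A color k EH.
  apply/edge_condE => u v; rewrite inE => /orP [/condG' H x | uvC x].
    by apply: le_trans (H x) _; rewrite lez_nat csup_subset.
  move: uvC; rewrite inE /= => /and3P [uC vC uv].
  have := cnt_le_csup_clique A color_proper x cl sCEH uC vC uv.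
  by case: x => /=; lia.
have [<- <-] := maxG' _ _ (is_subgraph_setU subG' (is_subgraph_clique cl))
                  condEH (subsetUl _ _) sE'EH.
split; first exact: subsetUr.
by move=> u v uC vC uv; apply: (subsetP sCEH); rewrite inE /= uC vC uv.
Qed.
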